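(* Let $k,l$ be positive integers. If $\mathcal{F}\subset[k]\times[l]$ does not contain three distinct elements $\mathbf u,\mathbf v,\mathbf w$ with $\mathbf u=\mathbf v\vee\mathbf w$, then $|\mathcal{F}|\le k+l$.
   Context: For $\mathbf v,\mathbf w\in[k]\times[l]$, $\mathbf v\vee\mathbf w$ is the coordinatewise maximum of $\mathbf v$ and $\mathbf w$. *)

From mathcomp Require Import all_boot.
Set Implicit Arguments. Unset Strict Implicit. Unset Printing Implicit Defensive.

(* [k] x [l] is modelled as 'I_k * 'I_l (i.e. {0..k-1} x {0..l-1}; the
   shift by one is an order isomorphism, so coordinatewise max is preserved). *)
Definition vjoin (k l : nat) (v w : 'I_k * 'I_l) : 'I_k * 'I_l :=
  (if v.1 <= w.1 then w.1 else v.1, if v.2 <= w.2 then w.2 else v.2).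

From mathcomp Require Import all_boot.

Set Implicit Arguments.
Unset Strict Implicit.
Unset Printing Implicit Defensive.

(* Call u in F a row minimum if no element of F in its row lies strictly below
   it, and a column minimum likewise.  Each row has at most one row minimum and
   each column at most one column minimum, so there are at most k + l of them.
   If u is neither, pick v in its row below u and w in its column left of u:
   then u = v \/ w with u, v, w distinct. *)

Definition fiber_min (T U : finType) (f : T -> U) (g : T -> nat) (F : {set T}) :=
  [set u in F | [forall v in F, (f v == f u) ==> (g u <= g v)]].

Lemma card_fiber_min (T U : finType) (f : T -> U) (g : T -> nat) (F : {set T}) :
  injective (fun u => (f u, g u)) -> #|fiber_min f g F| <= #|U|.
Proof.
move=> fg_inj; rewrite -(@card_in_imset _ _ f) ?max_card //.
move=> u u'; rewrite !inE => /andP[uF /forall_inP min_u] /andP[u'F /forall_inP min_u'] fuu'.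
have le_uu' := min_u u' u'F; have le_u'u := min_u' u uF.
rewrite fuu' eqxx /= in le_uu' le_u'u.
by apply: fg_inj; rewrite /= fuu' (@anti_leq (g u) (g u')) ?le_uu'.
Qed.

Lemma vjoin_row_col (k l : nat) (u v w : 'I_k * 'I_l) :
  v.1 = u.1 -> w.2 = u.2 -> w.1 <= u.1 -> v.2 <= u.2 -> vjoin v w = u.
Proof.
case: u => a b /= v1 w2 le_w1 le_v2.
rewrite /vjoin v1 w2 le_v2; case: leqP => [le_aw | //].
by congr pair; apply/val_inj/anti_leq; rewrite le_aw le_w1.
Qed.

Section JoinFree.

Variables (k l : nat) (F : {set 'I_k * 'I_l}).
Hypothesis join_free : forall u v w, u \in F -> v \in F -> w \in F ->
  u != v -> u != w -> v != w -> u <> vjoin v w.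

Let row_min := fiber_min (fun u => u.1) (fun u => val u.2) F.
Let col_min := fiber_min (fun u => u.2) (fun u => val u.1) F.

Lemma join_free_cover : F \subset row_min :|: col_min.
Proof.
apply/subsetP => u uF; rewrite !inE uF /=; apply/negPn/negP.
rewrite negb_or !negb_forall_in => /andP[/exists_inP[v vF +] /exists_inP[w wF +]].
rewrite !negb_imply -!ltnNge => /andP[/eqP v1 lt_v2] /andP[/eqP w2 lt_w1].
apply: (join_free uF vF wF); last by rewrite (vjoin_row_col v1 w2 (ltnW lt_w1) (ltnW lt_v2)).
- by apply/eqP => uv; rewrite uv ltnn in lt_v2.
- by apply/eqP => uw; rewrite uw ltnn in lt_w1.
- by apply/eqP => vw; rewrite vw w2 ltnn in lt_v2.
Qed.

End JoinFree.

Theorem mainTheorem8 (k l : nat) (hk : 0 < k) (hl : 0 < l)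
  (F : {set 'I_k * 'I_l}) :
  (forall u v w, u \in F -> v \in F -> w \in F ->
     u != v -> u != w -> v != w -> u <> vjoin v w) ->
  #|F| <= k + l.
Proof.
move=> join_free.
apply: leq_trans (subset_leq_card (join_free_cover join_free)) _.
apply: leq_trans (leq_card_setU _ _) _.
apply: leq_add; [rewrite -[k in _ <= k]card_ord | rewrite -[l in _ <= l]card_ord];
  by apply: card_fiber_min; case=> a b [a' b'] [/= -> /val_inj ->].
Qed.
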